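(* Consider $x(t+1)=Ax(t)+Bu(t)$, $y(t)=Cx(t)+e(t)+d(t)$ with $\|d(t)\|_\infty\le d_{\max}$ for all $t$, where there is a fixed set of at most $s$ sensors outside of which $e_i(t)=0$ for all $t$. Assume that $\mathcal{O}_\Gamma$ has full column rank for every $\Gamma\in\mathbb{C}_p^{p-s}$ (window length $l$ with $l+1\ge n$). Let $H\in\mathbb{R}^{r\times n}$, $q\in\mathbb{R}^r$, $\mathcal{C}=\{x:Hx+q\ge0\}$, $0<\gamma<1$, and let $u_{\mathrm{nom}}$ be any nominal input signal. For each $t\ge l$ let $u(t)=u_{\mathrm{safe}}(t)$ be the solution of the quadratic program $$u_{\mathrm{safe}}(t)=\arg\min_u\|u-u_{\mathrm{nom}}(t)\|^2\ \ \text{s.t.}\ \ HBu+H(A-(1-\gamma)I)x_d^{t,\Gamma}+\gamma q-\Delta_\Gamma\mathbf{1}\ge0\ \ \text{for all }\Gamma\in\mathbb{C}_p^{p-s}\text{ with }\underline d^\Gamma\le d_{\max},$$ and suppose this program is feasible for every $t\ge l$. If $x(l)\in\mathcal{C}$, then $x(t)\in\mathcal{C}$ for all $t\ge l$.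
   Context: $C_i$ is the $i$-th row of $C$; $\mathbb{C}_p^{p-s}$ is the collection of subsets of $\{1,\dots,p\}$ of size $p-s$. At time $t$, using the data $u(t-l),\dots,u(t-1)$, $y(t-l),\dots,y(t)$: $\mathcal{O}_i=(C_i;C_iA;\dots;C_iA^l)$, $\widetilde Y_i=(y_i(t-l),\dots,y_i(t))^\top$, $U=(u(t-l);\dots;u(t-1);0)$, $F_i$ the block lower-triangular matrix with $(j,k)$ block $C_iA^{j-k-1}B$ for $j>k$ and $0$ otherwise, $Y_i=\widetilde Y_i-F_iU$; $\mathcal{O}_\Gamma,Y_\Gamma$ are the vertical stacks over $i\in\Gamma$. $(x_d^{t-l,\Gamma},\underline d^\Gamma)$ is a minimizer of $\min_{x,\delta}\delta$ s.t. $-\delta\mathbf{1}\le\mathcal{O}_\Gamma x-Y_\Gamma\le\delta\mathbf{1}$; $d_e^\Gamma=d_{\max}+\underline d^\Gamma$; $x_d^{t,\Gamma}=A^lx_d^{t-l,\Gamma}+\sum_{k=1}^lA^{k-1}Bu(t-k)$; $m(\mathcal{O}_\Gamma)=\inf_{\|a\|_\infty=1}\|\mathcal{O}_\Gamma a\|_\infty$; $\Delta_\Gamma=\|H(A-(1-\gamma)I)\|_\infty\|A\|_\infty^l d_e^\Gamma/m(\mathcal{O}_\Gamma)$, with matrix $\infty$-norms the induced operator norms. Inequalities are componentwise. *)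

From HB Require Import structures.
From mathcomp Require Import all_boot all_order all_algebra.
From mathcomp Require Import boolp classical_sets reals.
Set Implicit Arguments. Unset Strict Implicit. Unset Printing Implicit Defensive.
Import Order.TTheory GRing.Theory Num.Theory.
Local Open Scope ring_scope.

Section Defs.
Variable R : realType.

Definition vnorm_inf k (v : 'cV[R]_k) : R := \big[Num.max/0]_(i < k) `|v i 0|.

Definition mxnorm_inf a b (M : 'M[R]_(a, b)) : R :=
  sup [set z | exists2 v : 'cV[R]_b, vnorm_inf v = 1 & z = vnorm_inf (M *m v)]%classic.

Definition mx_lowbound a b (M : 'M[R]_(a, b)) : R :=
  inf [set z | exists2 v : 'cV[R]_b, vnorm_inf v = 1 & z = vnorm_inf (M *m v)]%classic.

Variables (n m p l : nat).

Definition Obs_i (A : 'M[R]_n) (C : 'M[R]_(p, n)) (i : 'I_p) :=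
  \mxcol_(j < l.+1) (row i C *m A ^+ j).

(* O_Gamma: vertical stack of the O_i, i in Gamma (in increasing order) *)
Definition Obs_G (A : 'M[R]_n) (C : 'M[R]_(p, n)) (G : {set 'I_p}) :=
  \mxcol_(g < #|G|) Obs_i A C (enum_val g).

Definition Fmx_i (A : 'M[R]_n) (B : 'M[R]_(n, m)) (C : 'M[R]_(p, n)) (i : 'I_p) :=
  \mxblock_(j < l.+1, k < l.+1)
    ((if (k < j)%N then row i C *m A ^+ (j - k).-1 *m B else 0) : 'M[R]_(1, m)).

Definition Ustack (u : nat -> 'cV[R]_m) (t : nat) :=
  \mxcol_(k < l.+1) (if (k < l)%N then u (t - l + k)%N else 0).

Definition Ytil_i (y : nat -> 'cV[R]_p) (t : nat) (i : 'I_p) :=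
  \mxcol_(j < l.+1) ((y (t - l + j)%N i 0)%:M : 'M[R]_1).

Definition Y_i A B C (u : nat -> 'cV[R]_m) y t i :=
  Ytil_i y t i - Fmx_i A B C i *m Ustack u t.

Definition Y_G A B C (u : nat -> 'cV[R]_m) y t (G : {set 'I_p}) :=
  \mxcol_(g < #|G|) Y_i A B C u y t (enum_val g).

(* feasibility for the LP  min delta s.t. -delta 1 <= O_G x - Y_G <= delta 1 *)
Definition lp_feas A B C u y t G (x : 'cV[R]_n) (delta : R) :=
  forall k, `|(Obs_G A C G *m x - Y_G A B C u y t G) k 0| <= delta.

Definition lp_minimizer A B C u y t G x delta :=
  lp_feas A B C u y t G x delta /\
  forall x' delta', lp_feas A B C u y t G x' delta' -> delta <= delta'.

(* x_d^{t,G} = A^l x_d^{t-l,G} + sum_{k=1}^l A^(k-1) B u(t-k) *)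
Definition xd_now (A : 'M[R]_n) (B : 'M[R]_(n, m)) (u : nat -> 'cV[R]_m)
    (t : nat) (xdl : 'cV[R]_n) : 'cV[R]_n :=
  A ^+ l *m xdl + \sum_(1 <= k < l.+1) A ^+ k.-1 *m B *m u (t - k)%N.

Definition DeltaG r A C (H : 'M[R]_(r, n)) (gamma dmax dlow : R) G :=
  mxnorm_inf (H *m (A - (1 - gamma)%:M)) * mxnorm_inf A ^+ l * (dmax + dlow)
  / mx_lowbound (Obs_G A C G).

Definition qp_constr r A B C (H : 'M[R]_(r, n)) (q : 'cV[R]_r) gamma dmax
    (v : 'cV[R]_m) (xdt : 'cV[R]_n) (dlow : R) G :=
  forall k, 0 <= (H *m B *m v + H *m (A - (1 - gamma)%:M) *m xdt + gamma *: q
                  - DeltaG A C H gamma dmax dlow G *: const_mx 1) k 0.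

End Defs.

From HB Require Import structures.
From mathcomp Require Import all_boot all_order all_algebra.
From mathcomp Require Import classical_sets reals.
From mathcomp Require Import zify lra.
Set Implicit Arguments. Unset Strict Implicit. Unset Printing Implicit Defensive.
Import Order.TTheory GRing.Theory Num.Theory.
Local Open Scope ring_scope.

(* Fix a set [G] of [p - s] sensors avoiding the attacked ones.  The true state
   [x (t - l)] is feasible for the LP of [G] with [delta = dmax], its residual
   being pure noise; hence [dlow <= dmax] and the QP constraint for [G] binds
   [u t].  Both [x (t - l)] and the estimate fit the data up to [dmax] and
   [dlow], so [m(O_G) |x (t - l) - xd| <= dmax + dlow]; propagating through
   [A ^+ l] and [H (A - (1 - gamma) I)] bounds the effect of the estimation
   error by [Delta_G].  The QP constraint then gives
   [H x (t+1) + q >= (1 - gamma) (H x t + q) >= 0], and safety follows by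
   induction.  Neither the optimality of [u t] nor [n <= l.+1] is needed. *)

Section InfinityNorms.
Variable R : realType.
Implicit Types (a b k : nat).

Lemma vnorm_inf_ge0 k (v : 'cV[R]_k) : 0 <= vnorm_inf v.
Proof. by apply: (big_ind (fun z => 0 <= z)) => // z w z0 w0; rewrite le_max z0. Qed.

Lemma entry_le_vnorm_inf k (v : 'cV[R]_k) i : `|v i 0| <= vnorm_inf v.
Proof. exact: (le_bigmax _ (fun i => `|v i 0|)). Qed.

Lemma vnorm_inf_le k (v : 'cV[R]_k) z :
  0 <= z -> (forall i, `|v i 0| <= z) -> vnorm_inf v <= z.
Proof. by move=> z0 vz; apply: bigmax_le. Qed.

Lemma vnorm_inf0 k : vnorm_inf (0 : 'cV[R]_k) = 0.
Proof.
by apply/le_anti; rewrite vnorm_inf_ge0 andbT vnorm_inf_le // => i; rewrite mxE normr0.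
Qed.

Lemma vnorm_inf_eq0 k (v : 'cV[R]_k) : vnorm_inf v = 0 -> v = 0.
Proof.
move=> v0; apply/matrixP => i j; rewrite (ord1 j) !mxE.
by apply/eqP; rewrite -normr_eq0 eq_le normr_ge0 -v0 entry_le_vnorm_inf.
Qed.

Lemma vnorm_infZ k (c : R) (v : 'cV[R]_k) : vnorm_inf (c *: v) = `|c| * vnorm_inf v.
Proof.
apply/le_anti/andP; split.
  apply: vnorm_inf_le => [|i]; first by rewrite mulr_ge0 ?vnorm_inf_ge0.
  by rewrite mxE normrM ler_wpM2l ?entry_le_vnorm_inf.
have [->|c0] := eqVneq c 0; first by rewrite normr0 mul0r vnorm_inf_ge0.
rewrite -ler_pdivlMl ?normr_gt0 //.
apply: vnorm_inf_le => [|i]; first by rewrite mulr_ge0 ?vnorm_inf_ge0 ?invr_ge0.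
rewrite ler_pdivlMl ?normr_gt0 // -normrM.
by have := entry_le_vnorm_inf (c *: v) i; rewrite mxE.
Qed.

Lemma vnorm_inf_const1 k : (0 < k)%N -> vnorm_inf (const_mx 1 : 'cV[R]_k) = 1.
Proof.
move=> k0; apply/le_anti/andP; split.
  by apply: vnorm_inf_le => // i; rewrite mxE normr1.
by have := entry_le_vnorm_inf (const_mx 1 : 'cV[R]_k) (Ordinal k0); rewrite mxE normr1.
Qed.

Definition mx_abssum a b (M : 'M[R]_(a, b)) : R := \sum_i \sum_j `|M i j|.

Lemma mx_abssum_ge0 a b (M : 'M[R]_(a, b)) : 0 <= mx_abssum M.
Proof. by apply: sumr_ge0 => i _; apply: sumr_ge0. Qed.

Lemma vnorm_inf_mulmx_abssum a b (M : 'M[R]_(a, b)) v :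
  vnorm_inf (M *m v) <= mx_abssum M * vnorm_inf v.
Proof.
apply: vnorm_inf_le => [|i]; first by rewrite mulr_ge0 ?mx_abssum_ge0 ?vnorm_inf_ge0.
rewrite mxE; apply: le_trans (ler_norm_sum _ _ _) _.
apply: (@le_trans _ _ (\sum_j `|M i j| * vnorm_inf v)).
  by apply: ler_sum => j _; rewrite normrM ler_wpM2l ?entry_le_vnorm_inf.
rewrite -mulr_suml ler_wpM2r ?vnorm_inf_ge0 // /mx_abssum (bigD1 i) //= lerDl.
by apply: sumr_ge0 => i' _; apply: sumr_ge0.
Qed.

Definition gain_set a b (M : 'M[R]_(a, b)) :=
  [set z | exists2 v : 'cV[R]_b, vnorm_inf v = 1 & z = vnorm_inf (M *m v)]%classic.

Lemma gain_set_ratio a b (M : 'M[R]_(a, b)) v : 0 < vnorm_inf v ->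
  gain_set M (vnorm_inf (M *m v) / vnorm_inf v).
Proof.
move=> v0; exists ((vnorm_inf v)^-1 *: v).
  by rewrite vnorm_infZ ger0_norm ?invr_ge0 ?vnorm_inf_ge0 // mulVf ?gt_eqF.
by rewrite -scalemxAr vnorm_infZ ger0_norm ?invr_ge0 ?vnorm_inf_ge0 // mulrC.
Qed.

Lemma gain_set_has_sup a b (M : 'M[R]_(a, b)) :
  (gain_set M !=set0)%classic -> has_sup (gain_set M).
Proof.
split=> //; exists (mx_abssum M) => z [v v1 ->].
by have := vnorm_inf_mulmx_abssum M v; rewrite v1 mulr1.
Qed.

Lemma mxnorm_inf_ge0 a b (M : 'M[R]_(a, b)) : 0 <= mxnorm_inf M.
Proof.
rewrite /mxnorm_inf -/(gain_set M).
have [->|/set0P[z Mz]] := eqVneq (gain_set M) set0; first by rewrite sup0.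
apply: le_trans (sup_upper_bound (gain_set_has_sup (ex_intro _ z Mz)) Mz).
by case: Mz => v _ ->; apply: vnorm_inf_ge0.
Qed.

Lemma vnorm_inf_mulmx_le a b (M : 'M[R]_(a, b)) v :
  vnorm_inf (M *m v) <= mxnorm_inf M * vnorm_inf v.
Proof.
have [v0|v_neq0] := eqVneq (vnorm_inf v) 0.
  by rewrite (vnorm_inf_eq0 v0) mulmx0 !vnorm_inf0 mulr0.
have v_gt0 : 0 < vnorm_inf v by rewrite lt_neqAle eq_sym v_neq0 vnorm_inf_ge0.
have Mv := gain_set_ratio M v_gt0.
have := sup_upper_bound (gain_set_has_sup (ex_intro _ _ Mv)) Mv.
by rewrite ler_pdivrMr.
Qed.

Lemma mx_lowbound_mulmx_le a b (M : 'M[R]_(a, b)) v :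
  mx_lowbound M * vnorm_inf v <= vnorm_inf (M *m v).
Proof.
have [->|v_neq0] := eqVneq (vnorm_inf v) 0; first by rewrite mulr0 vnorm_inf_ge0.
have v_gt0 : 0 < vnorm_inf v by rewrite lt_neqAle eq_sym v_neq0 vnorm_inf_ge0.
have lbM : has_lbound (gain_set M) by exists 0 => z [w _ ->]; apply: vnorm_inf_ge0.
by have := ge_inf lbM (gain_set_ratio M v_gt0); rewrite ler_pdivlMr.
Qed.

(* A left inverse [L] gives [|w| = |L (M w)| <= mx_abssum L * |M w|]. *)
Lemma mx_lowbound_gt0 a b (M : 'M[R]_(a, b)) (L : 'M[R]_(b, a)) :
  (0 < b)%N -> L *m M = 1%:M -> 0 < mx_lowbound M.
Proof.
move=> b0 LM; have c_gt0 : 0 < mx_abssum L + 1 by rewrite ltr_wpDl ?mx_abssum_ge0.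
apply: (@lt_le_trans _ _ (mx_abssum L + 1)^-1); first by rewrite invr_gt0.
apply: lb_le_inf => [|z [w w1 ->]].
  by exists (vnorm_inf (M *m const_mx 1)), (const_mx 1); rewrite ?vnorm_inf_const1.
rewrite -[_^-1]mul1r ler_pdivrMr // mulrC.
have := vnorm_inf_mulmx_abssum L (M *m w); rewrite mulmxA LM mul1mx w1.
by move/le_trans; apply; rewrite ler_wpM2r ?vnorm_inf_ge0 // lerDl.
Qed.

Lemma vnorm_inf_mulmx_expr_le k (A : 'M[R]_k) (w : 'cV[R]_k) j :
  vnorm_inf (A ^+ j *m w) <= mxnorm_inf A ^+ j * vnorm_inf w.
Proof.
elim: j => [|j IH]; first by rewrite expr0 mul1mx mul1r.
rewrite exprS -mulmxA exprS -mulrA; apply: le_trans (vnorm_inf_mulmx_le _ _) _.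
by rewrite ler_wpM2l ?mxnorm_inf_ge0.
Qed.

End InfinityNorms.

Section Trajectory.
Variables (R : realType) (n m : nat) (A : 'M[R]_n) (B : 'M[R]_(n, m)).
Variables (x : nat -> 'cV[R]_n) (u : nat -> 'cV[R]_m).
Hypothesis dynamics : forall t, x t.+1 = A *m x t + B *m u t.

Lemma state_shift a j :
  x (a + j)%N = A ^+ j *m x a + \sum_(0 <= k < j) A ^+ (j - k).-1 *m B *m u (a + k)%N.
Proof.
elim: j => [|j IH]; first by rewrite addn0 expr0 mul1mx big_geq // addr0.
rewrite addnS dynamics IH mulmxDr mulmxA -[A *m _]exprS big_nat_recr //= subSnn expr0 mul1mx.
rewrite addrA mulmx_sumr; congr (_ + _ + _); apply: eq_big_nat => k /andP[_ kj].
by rewrite !mulmxA -[A *m _]exprS subSn ?prednK ?subn_gt0 // ltnW.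
Qed.

Lemma state_window l t : (l <= t)%N -> x t = xd_now l A B u t (x (t - l)%N).
Proof.
move=> l_le_t; rewrite /xd_now -{1}(subnK l_le_t) state_shift; congr (_ + _).
rewrite big_add1 /= big_nat_rev /=; apply: eq_big_nat => k /andP[_ kl].
by rewrite add0n; congr (_ ^+ _ *m _ *m u _); lia.
Qed.

End Trajectory.

Lemma xd_nowB (R : realType) n m l (A : 'M[R]_n) (B : 'M[R]_(n, m)) u t a b :
  xd_now l A B u t a - xd_now l A B u t b = A ^+ l *m (a - b).
Proof. by rewrite /xd_now opprD addrACA subrr addr0 mulmxBr. Qed.

Lemma Fmx_i_mul_Ustack (R : realType) n m p l (A : 'M[R]_n) (B : 'M[R]_(n, m))
    (C : 'M[R]_(p, n)) (u : nat -> 'cV[R]_m) t i :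
  Fmx_i l A B C i *m Ustack l u t =
  \mxcol_(j < l.+1) (row i C *m \sum_(0 <= k < j) A ^+ (j - k).-1 *m B *m u (t - l + k)%N).
Proof.
rewrite /Fmx_i /Ustack mul_mxblock_mxrow; apply: eq_mxcol => j.
have jl : (j <= l)%N by rewrite -ltnS.
rewrite (big_nat_widen _ _ _ _ _ (ltnW (ltn_ord j))) big_mkord mulmx_sumr [RHS]big_mkcond /=.
apply: eq_bigr => k _; case: ifP => kj; last by rewrite mul0mx.
by rewrite (leq_trans kj jl) !mulmxA.
Qed.

Section Residual.
Variables (R : realType) (n m p l : nat).
Variables (A : 'M[R]_n) (B : 'M[R]_(n, m)) (C : 'M[R]_(p, n)).
Variables (x : nat -> 'cV[R]_n) (u : nat -> 'cV[R]_m) (y e d : nat -> 'cV[R]_p).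
Hypothesis dynamics : forall t, x t.+1 = A *m x t + B *m u t.
Hypothesis measurement : forall t, y t = C *m x t + e t + d t.

Lemma measurement_row t i : (y t i 0)%:M = row i C *m x t + (e t i 0 + d t i 0)%:M.
Proof.
rewrite measurement -row_mul [row i _]mx11_scalar -raddfD /=.
by rewrite !mxE addrA.
Qed.

Lemma Obs_i_residual t i :
  Obs_i l A C i *m x (t - l)%N - Y_i l A B C u y t i =
  \mxcol_(j < l.+1) (- (e (t - l + j)%N i 0 + d (t - l + j)%N i 0))%:M.
Proof.
rewrite /Y_i /Ytil_i Fmx_i_mul_Ustack /Obs_i mxcol_mul opprB addrA -mxcolD -mxcolB.
apply: eq_mxcol => j; rewrite measurement_row (state_shift dynamics) mulmxDr !mulmxA.
by rewrite opprD addrA subrr sub0r raddfN.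
Qed.
End Residual.

Lemma lp_feas_true_state (R : realType) n m p l (A : 'M[R]_n) (B : 'M[R]_(n, m))
    (C : 'M[R]_(p, n)) (x : nat -> 'cV[R]_n) (u : nat -> 'cV[R]_m)
    (y e d : nat -> 'cV[R]_p) (G : {set 'I_p}) (dmax : R) t :
  (forall t, x t.+1 = A *m x t + B *m u t) ->
  (forall t, y t = C *m x t + e t + d t) ->
  (forall t i, `|d t i 0| <= dmax) ->
  (forall t i, i \in G -> e t i 0 = 0) ->
  lp_feas l A B C u y t G (x (t - l)%N) dmax.
Proof.
move=> dynamics measurement noise clean k.
rewrite /Obs_G /Y_G mxcol_mul -mxcolB.
under eq_mxcol => g do rewrite (Obs_i_residual _ dynamics measurement).
rewrite !mxE (ord1 (tagnat.sig2 (tagnat.sig2 k))) eqxx mulr1n.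
by rewrite clean ?enum_valP // add0r normrN noise.
Qed.

Lemma lp_feas_gap (R : realType) n m p l (A : 'M[R]_n) (B : 'M[R]_(n, m))
    (C : 'M[R]_(p, n)) (u : nat -> 'cV[R]_m) (y : nat -> 'cV[R]_p) t (G : {set 'I_p})
    (x1 x2 : 'cV[R]_n) (delta1 delta2 : R) :
  (0 < \rank (Obs_G l A C G))%N ->
  lp_feas l A B C u y t G x1 delta1 -> lp_feas l A B C u y t G x2 delta2 ->
  vnorm_inf (Obs_G l A C G *m (x1 - x2)) <= delta1 + delta2.
Proof.
move=> rank_gt0 feas1 feas2; set O := Obs_G l A C G.
have /(leq_trans rank_gt0) rows_gt0 := rank_leq_row O.
apply: vnorm_inf_le => [|i].
  pose row0 := Ordinal rows_gt0.
  by rewrite addr_ge0 // (le_trans (normr_ge0 _) (feas1 row0), le_trans (normr_ge0 _) (feas2 row0)).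
have -> : O *m (x1 - x2) = (O *m x1 - Y_G l A B C u y t G) - (O *m x2 - Y_G l A B C u y t G).
  by rewrite mulmxBr opprB addrA subrK.
rewrite [X in `|X| <= _]mxE [X in `|_ + X|]mxE.
by apply: le_trans (ler_normB _ _) _; apply: lerD.
Qed.

Lemma estimation_error_le (R : realType) n m p r l (A : 'M[R]_n) (B : 'M[R]_(n, m))
    (C : 'M[R]_(p, n)) (H : 'M[R]_(r, n)) gamma (u : nat -> 'cV[R]_m)
    (y : nat -> 'cV[R]_p) t (G : {set 'I_p}) (xw xdw : 'cV[R]_n) (delta delta' : R) :
  (0 < n)%N -> \rank (Obs_G l A C G) = n ->
  lp_feas l A B C u y t G xw delta -> lp_feas l A B C u y t G xdw delta' ->
  forall k, `|(H *m (A - (1 - gamma)%:M) *m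
                 (xd_now l A B u t xw - xd_now l A B u t xdw)) k 0|
              <= DeltaG l A C H gamma delta delta' G.
Proof.
move=> n_gt0 rankO feas feas' k; set O := Obs_G l A C G.
have gap := lp_feas_gap (etrans (congr1 _ rankO) n_gt0) feas feas'.
have [L LO] : exists L, L *m O = 1%:M by apply/row_fullP; rewrite /row_full rankO.
have mO := mx_lowbound_gt0 n_gt0 LO.
have err_le : vnorm_inf (xw - xdw) <= (delta + delta') / mx_lowbound O.
  by rewrite ler_pdivlMr // mulrC (le_trans (mx_lowbound_mulmx_le O _)).
apply: le_trans (entry_le_vnorm_inf _ k) _; rewrite xd_nowB.
apply: le_trans (vnorm_inf_mulmx_le _ _) _.
rewrite /DeltaG -/O -!mulrA ler_wpM2l ?mxnorm_inf_ge0 //.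
apply: le_trans (vnorm_inf_mulmx_expr_le _ _ _) _.
by rewrite ler_wpM2l ?exprn_ge0 ?mxnorm_inf_ge0.
Qed.

(* With [M := A - (1 - gamma) I], the barrier value at the next state splits as
   (QP constraint at [xd]) + (Delta + H M (x - xd)) + (1 - gamma) (H x + q). *)
Lemma barrier_step (R : realType) n m r (A : 'M[R]_n) (B : 'M[R]_(n, m))
    (H : 'M[R]_(r, n)) (q : 'cV[R]_r) (gamma Delta : R) (x xd : 'cV[R]_n) (v : 'cV[R]_m) :
  gamma <= 1 ->
  (forall k, 0 <= (H *m x + q) k 0) ->
  (forall k, 0 <= (H *m B *m v + H *m (A - (1 - gamma)%:M) *m xd + gamma *: q
                   - Delta *: const_mx 1) k 0) ->
  (forall k, `|(H *m (A - (1 - gamma)%:M) *m (x - xd)) k 0| <= Delta) ->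
  forall k, 0 <= (H *m (A *m x + B *m v) + q) k 0.
Proof.
move=> gamma_le1 safe constr err k.
have HA z : H *m (A - (1 - gamma)%:M) *m z = H *m A *m z - (1 - gamma) *: (H *m z).
  by rewrite mulmxBr mulmxBl mul_mx_scalar -scalemxAl.
have gamma' : 0 <= 1 - gamma by rewrite subr_ge0.
have := constr k; have /ler_normlP[+ _] := err k; have := mulr_ge0 gamma' (safe k).
rewrite !HA mulmxDr !mulmxA !mulmxBr scalerBr !mxE; lra.
Qed.

Lemma exists_subset_card (T : finType) (S : {set T}) k :
  (k <= #|S|)%N -> exists2 G : {set T}, G \subset S & #|G| = k.
Proof.
rewrite -bin_gt0 -cards_draws => /card_gt0P[G].
by rewrite inE => /andP[GS /eqP Gk]; exists G.
Qed.

Theorem theorem1 (R : realType) (n m p r s l : nat)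
  (A : 'M[R]_n) (B : 'M[R]_(n, m)) (C : 'M[R]_(p, n))
  (H : 'M[R]_(r, n)) (q : 'cV[R]_r) (gamma dmax : R)
  (x : nat -> 'cV[R]_n) (u unom : nat -> 'cV[R]_m)
  (y e d : nat -> 'cV[R]_p)
  (xdl : nat -> {set 'I_p} -> 'cV[R]_n) (dlow : nat -> {set 'I_p} -> R) :
  (forall t, x t.+1 = A *m x t + B *m u t) ->
  (forall t, y t = C *m x t + e t + d t) ->
  (forall t (i : 'I_p), `|d t i 0| <= dmax) ->
  (exists S : {set 'I_p}, (#|S| <= s)%N /\ forall t i, i \notin S -> e t i 0 = 0) ->
  (n <= l.+1)%N ->
  (forall G : {set 'I_p}, #|G| = (p - s)%N -> \rank (Obs_G l A C G) = n) ->
  0 < gamma < 1 ->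
  (forall t (G : {set 'I_p}), (l <= t)%N -> #|G| = (p - s)%N ->
     lp_minimizer l A B C u y t G (xdl t G) (dlow t G)) ->
  (forall t, (l <= t)%N ->
     let feas := fun v : 'cV[R]_m =>
       forall G : {set 'I_p}, #|G| = (p - s)%N -> dlow t G <= dmax ->
         qp_constr l A B C H q gamma dmax v (xd_now l A B u t (xdl t G))
           (dlow t G) G in
     feas (u t) /\
     forall v, feas v ->
       \sum_(k < m) (u t k 0 - unom t k 0) ^+ 2
         <= \sum_(k < m) (v k 0 - unom t k 0) ^+ 2) ->
  (forall k, 0 <= (H *m x l + q) k 0) ->
  forall t, (l <= t)%N -> forall k, 0 <= (H *m x t + q) k 0.
Proof.
move=> dynamics measurement noise [S [S_le attack]] _ rankO /andP[_ gamma_lt1] lp qp safe_l.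
have [n0|n_gt0] := posnP n.
  by move=> t _ k; subst n; rewrite (flatmx0 (x t)) -(flatmx0 (x l)).
have [G GS G_card] : exists2 G : {set 'I_p}, G \subset ~: S & #|G| = (p - s)%N.
  apply: exists_subset_card; have := cardsC S; rewrite card_ord; lia.
have clean t i : i \in G -> e t i 0 = 0.
  by move=> /(fintype.subsetP GS); rewrite inE; apply: attack.
move=> t /subnK <-; elim: (t - l)%N => [//|j IH].
have l_le : (l <= j + l)%N by rewrite leq_addl.
have [feas_xdl min_dlow] := lp _ G l_le G_card.
have feas_x : lp_feas l A B C u y (j + l) G (x (j + l - l)%N) dmax.
  exact: lp_feas_true_state dynamics measurement noise clean.
rewrite addSn dynamics; apply: (barrier_step (ltW gamma_lt1) IH).
  exact: (qp _ l_le).1 G G_card (min_dlow _ _ feas_x).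
rewrite {1}(state_window dynamics l_le).
exact: estimation_error_le n_gt0 (rankO G G_card) feas_x feas_xdl.
Qed.
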